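(* Let $S_1=(x_1,y_1),S_2=(x_2,y_2),S_3=(x_3,y_3),S_4=(x_4,y_4)$ be four points in the plane with $x_1\le x_2\le x_3\le x_4$, and let $\delta_1,\ldots,\delta_4$ be positive integers. For $i\in\{1,\dots,4\}$ define the pivot point $P_i=(\tilde x_i,\tilde y_i)$ by $$\tilde x_i=x_i+\frac{\sum_{j=1}^4\delta_j(x_j-x_i)^2}{\sum_{j=1}^4\delta_j(x_j-x_i)},\qquad \tilde y_i=y_i+\frac{\sum_{j=1}^4\delta_j(x_j-x_i)(y_j-y_i)}{\sum_{j=1}^4\delta_j(x_j-x_i)},$$ whenever the denominator is nonzero. Then: (a) whenever $P_2$ is defined, there are real numbers $\lambda_1,\lambda_3,\lambda_4$ with $\lambda_1+\lambda_3+\lambda_4=1$ and $P_2=\lambda_1S_1+\lambda_3S_3+\lambda_4S_4$ such that either ($\lambda_1\ge 0$, $\lambda_3\le 0$, $\lambda_4\le 0$) or ($\lambda_1\le 0$, $\lambda_3\ge 0$, $\lambda_4\ge 0$); i.e. $P_2$ lies in the regions of sign pattern $+--$ or $-++$ with respect to the triangle $S_1S_3S_4$; (b) whenever $P_3$ is defined, there are real numbers $\mu_1,\mu_2,\mu_4$ with $\mu_1+\mu_2+\mu_4=1$ and $P_3=\mu_1S_1+\mu_2S_2+\mu_4S_4$ such that either ($\mu_1\ge0$, $\mu_2\ge 0$, $\mu_4\le 0$) or ($\mu_1\le 0$, $\mu_2\le 0$, $\mu_4\ge 0$); i.e. $P_3$ lies in the regions of sign pattern $++-$ or $--+$ with respect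 to the triangle $S_1S_2S_4$.
   Context: The pivot point $P_i$ is the point through which the least-squares regression line of the data, in which each $S_j$ appears $\delta_j$ times, always passes regardless of how many additional copies of $S_i$ are added; it is undefined when $\sum_j\delta_j(x_j-x_i)=0$. For a triangle $ABC$, the barycentric coordinates of a point $Q$ are the reals $(\lambda_A,\lambda_B,\lambda_C)$ with sum $1$ and $Q=\lambda_AA+\lambda_BB+\lambda_CC$ (unique when $A,B,C$ are not collinear); the sign pattern of $(\lambda_A,\lambda_B,\lambda_C)$ (e.g. $+--$) determines which of the seven regions cut out by the three edge-lines contains $Q$. *)

From mathcomp Require Import all_boot all_order all_algebra.
Set Implicit Arguments. Unset Strict Implicit. Unset Printing Implicit Defensive.
Import Order.TTheory GRing.Theory Num.Theory.
Local Open Scope ring_scope.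

(* Points S_j = (x j, y j) and multiplicities delta j, indexed 1..4 as in the
   paper (values at other indices are irrelevant). *)

Definition pivot_den (R : realFieldType) (x : nat -> R) (delta : nat -> nat)
  (i : nat) : R :=
  \sum_(1 <= j < 5) (delta j)%:R * (x j - x i).

Definition pivot_x (R : realFieldType) (x : nat -> R) (delta : nat -> nat)
  (i : nat) : R :=
  x i + (\sum_(1 <= j < 5) (delta j)%:R * (x j - x i) ^+ 2) / pivot_den x delta i.

Definition pivot_y (R : realFieldType) (x y : nat -> R) (delta : nat -> nat)
  (i : nat) : R :=
  y i + (\sum_(1 <= j < 5) (delta j)%:R * ((x j - x i) * (y j - y i)))
          / pivot_den x delta i.

From mathcomp Require Import all_boot all_order all_algebra.
From mathcomp Require Import ring lra.
Set Implicit Arguments. Unset Strict Implicit. Unset Printing Implicit Defensive.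
Import Order.TTheory GRing.Theory Num.Theory.
Local Open Scope ring_scope.

(* The pivot point is the affine combination P_i = sum_j w_j S_j with weights
   w_j = delta_j (x_j - x_i) / D_i, where D_i is the denominator of P_i.  The
   weight of S_i itself vanishes, and w_j has the sign of D_i (x_j - x_i): as the
   abscissae are sorted, the points left of S_i get the sign opposite to that of
   the points right of S_i. *)

Lemma sum_1_4 (V : nmodType) (F : nat -> V) :
  \sum_(1 <= j < 5) F j = F 1%N + F 2%N + F 3%N + F 4%N.
Proof. by rewrite 4?big_ltn // big_geq // addr0 !addrA. Qed.

Lemma weighted_mean_shift (F : fieldType) (I : Type) (r : seq I)
    (c f : I -> F) (a : F) :
  \sum_(j <- r) c j != 0 ->
  a + (\sum_(j <- r) c j * (f j - a)) / \sum_(j <- r) c j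
    = \sum_(j <- r) c j / (\sum_(j <- r) c j) * f j.
Proof.
set C := \sum_(j <- r) c j => hC.
have -> : \sum_(j <- r) c j * (f j - a) = \sum_(j <- r) c j * f j - C * a.
  by rewrite /C mulr_suml -sumrB; apply: eq_bigr => j _; rewrite mulrBr.
rewrite mulrBl mulrAC mulfV // mul1r addrC subrK mulr_suml.
by apply: eq_bigr => j _; rewrite mulrAC.
Qed.

Section PivotWeights.

Variables (R : realFieldType) (x y : nat -> R) (delta : nat -> nat) (i : nat).

Definition pivot_weight (j : nat) : R :=
  (delta j)%:R * (x j - x i) / pivot_den x delta i.

Hypothesis den_neq0 : pivot_den x delta i != 0.

Lemma pivot_weight_sum : \sum_(1 <= j < 5) pivot_weight j = 1.
Proof. by rewrite -mulr_suml mulfV. Qed.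

Lemma pivot_x_combination :
  pivot_x x delta i = \sum_(1 <= j < 5) pivot_weight j * x j.
Proof.
rewrite /pivot_x; under eq_bigr => j _ do rewrite expr2 mulrA.
exact: weighted_mean_shift.
Qed.

Lemma pivot_y_combination :
  pivot_y x y delta i = \sum_(1 <= j < 5) pivot_weight j * y j.
Proof.
rewrite /pivot_y; under eq_bigr => j _ do rewrite mulrA.
exact: weighted_mean_shift.
Qed.

End PivotWeights.

Section PivotWeightSign.

Variables (R : realFieldType) (x : nat -> R) (delta : nat -> nat) (i j : nat).

Local Notation D := (pivot_den x delta i).
Local Notation w := (pivot_weight x delta i j).

Lemma pivot_weight_self : pivot_weight x delta i i = 0.
Proof. by rewrite /pivot_weight subrr mulr0 mul0r. Qed.

Lemma pivot_weight_sqr : w = (delta j)%:R * (D * (x j - x i)) / D ^+ 2.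
Proof.
rewrite /pivot_weight; have [->|hD] := eqVneq D 0.
  by rewrite expr0n /= !invr0 !mulr0.
by field.
Qed.

Lemma pivot_weight_ge0 : 0 <= D * (x j - x i) -> 0 <= w.
Proof.
by move=> h; rewrite pivot_weight_sqr divr_ge0 ?sqr_ge0 // mulr_ge0.
Qed.

Lemma pivot_weight_le0 : D * (x j - x i) <= 0 -> w <= 0.
Proof.
by move=> h; rewrite pivot_weight_sqr mulr_le0_ge0 ?invr_ge0 ?sqr_ge0 // mulr_ge0_le0.
Qed.

End PivotWeightSign.

Theorem proposition3 (R : realFieldType) (x y : nat -> R) (delta : nat -> nat)
  (hdelta : forall j, (1 <= j <= 4)%N -> (0 < delta j)%N)
  (hx12 : x 1%N <= x 2%N) (hx23 : x 2%N <= x 3%N) (hx34 : x 3%N <= x 4%N) :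
  (pivot_den x delta 2 != 0 ->
    exists l1 l3 l4 : R,
      [/\ l1 + l3 + l4 = 1,
          pivot_x x delta 2 = l1 * x 1%N + l3 * x 3%N + l4 * x 4%N,
          pivot_y x y delta 2 = l1 * y 1%N + l3 * y 3%N + l4 * y 4%N &
          (0 <= l1 /\ l3 <= 0 /\ l4 <= 0) \/ (l1 <= 0 /\ 0 <= l3 /\ 0 <= l4)])
  /\
  (pivot_den x delta 3 != 0 ->
    exists m1 m2 m4 : R,
      [/\ m1 + m2 + m4 = 1,
          pivot_x x delta 3 = m1 * x 1%N + m2 * x 2%N + m4 * x 4%N,
          pivot_y x y delta 3 = m1 * y 1%N + m2 * y 2%N + m4 * y 4%N &
          (0 <= m1 /\ 0 <= m2 /\ m4 <= 0) \/ (m1 <= 0 /\ m2 <= 0 /\ 0 <= m4)]).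
Proof.
split=> hD.
- exists (pivot_weight x delta 2 1), (pivot_weight x delta 2 3),
    (pivot_weight x delta 2 4).
  rewrite pivot_x_combination // pivot_y_combination // -(pivot_weight_sum hD).
  rewrite !sum_1_4 pivot_weight_self !mul0r !addr0; split=> //.
  move: hD; rewrite neq_lt => /orP[Dlt0|Dgt0]; [left|right].
  + by rewrite pivot_weight_ge0 ?pivot_weight_le0 //; nra.
  + by rewrite pivot_weight_le0 ?pivot_weight_ge0 //; nra.
- exists (pivot_weight x delta 3 1), (pivot_weight x delta 3 2),
    (pivot_weight x delta 3 4).
  rewrite pivot_x_combination // pivot_y_combination // -(pivot_weight_sum hD).
  rewrite !sum_1_4 pivot_weight_self !mul0r !addr0; split=> //.
  move: hD; rewrite neq_lt => /orP[Dlt0|Dgt0]; [left|right].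
  + by rewrite !pivot_weight_ge0 ?pivot_weight_le0 //; nra.
  + by rewrite !pivot_weight_le0 ?pivot_weight_ge0 //; nra.
Qed.
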